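(* Let $S$ be epsilon-strongly graded and let $r,s\in B(\mathcal{E}_G)^*$ be distinct epsilon-central elements. Then: (i) $(rS_g)(rS_h)=rS_{gh}$ for all $g,h\in N(r)$; in particular $rS=\bigoplus_{g\in N(r)}rS_g$ (with $rS_g=0$ for $g\notin N(r)$), and $rS$ is a strongly $N(r)$-graded ring with identity $r$; (ii) with $N=N(r)\cap N(s)$, the ring $(rS)_N\oplus(sS)_N$, where $(rS)_N=\bigoplus_{g\in N}rS_g$ and $(sS)_N=\bigoplus_{g\in N}sS_g$, is strongly $N$-graded (with components $rS_g\oplus sS_g$, $g\in N$) and has identity $r+s$.
   Context: $G$ is a group with identity $e$; $S=\bigoplus_{g\in G}S_g$ is an associative unital ring graded by $G$, $R=S_e$, $XY$ denotes finite sums of products. $S$ is epsilon-strongly graded: each ideal $S_gS_{g^{-1}}$ of $R$ has an identity $\epsilon_g$ with $\epsilon_gs=s=s\epsilon_{g^{-1}}$ for $s\in S_g$; $\epsilon_e=1$; each $\epsilon_g$ is an idempotent in $Z(R)$. $B(\mathcal{E}_G)$ is the multiplicative semigroup generated by $\{\epsilon_g:g\in G\}$, $B(\mathcal{E}_G)^*=B(\mathcal{E}_G)\setminus\{0\}$, ordered by $a\le b$ iff $a=ab$. For $r\in B(\mathcal{E}_G)^*$, $N(r)=\{g\in G:r\epsilon_g=r\}$. An element $r\in B(\mathcal{E}_G)^*$ is epsilon-central if it is minimal in $B(\mathcal{E}_G)^*$ and $N(r)$ is a subgroup of $G$ (equivalently, for minimal $r$, $r$ lies in the center of $S$). A ring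 graded by a group $H$ is strongly $H$-graded if $A_gA_h=A_{gh}$ for all $g,h\in H$. *)

From HB Require Import structures.
From mathcomp Require Import all_boot all_algebra.
Set Implicit Arguments.
Unset Strict Implicit.
Unset Printing Implicit Defensive.
Import GRing.Theory.
Local Open Scope ring_scope.

Section Defs.
Variables (G : groupType) (S : pzRingType).

Definition prodset (X Y : S -> Prop) : S -> Prop :=
  fun z => exists n (a b : 'I_n -> S),
    (forall i, X (a i) /\ Y (b i)) /\ z = \sum_(i < n) a i * b i.

Definition lmulset (r : S) (X : S -> Prop) : S -> Prop :=
  fun z => exists x, X x /\ z = r * x.

Definition additive_subgroup (A : S -> Prop) : Prop :=
  A 0 /\ (forall x y, A x -> A y -> A (x - y)).

Definition is_grading (H : G -> Prop) (A : S -> Prop) (A_ : G -> S -> Prop)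
  : Prop :=
  [/\ (forall g, H g -> additive_subgroup (A_ g) /\ (forall x, A_ g x -> A x)),
      (forall x, A x -> exists n (gs : 'I_n -> G) (xs : 'I_n -> S),
          (forall i, H (gs i) /\ A_ (gs i) (xs i)) /\ x = \sum_(i < n) xs i),
      (forall n (gs : 'I_n -> G) (xs : 'I_n -> S), injective gs ->
          (forall i, H (gs i) /\ A_ (gs i) (xs i)) ->
          \sum_(i < n) xs i = 0 -> forall i, xs i = 0) &
      (forall g h x y, H g -> H h -> A_ g x -> A_ h y -> A_ (g * h)%g (x * y))].

Definition graded (S_ : G -> S -> Prop) : Prop :=
  is_grading (fun _ => True) (fun _ => True) S_.

Definition strongly_graded_ring_with_id (H : G -> Prop) (A : S -> Prop)
  (A_ : G -> S -> Prop) (u : S) : Prop :=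
  [/\ additive_subgroup A /\ (forall x y, A x -> A y -> A (x * y)),
      A u /\ (forall x, A x -> u * x = x /\ x * u = x),
      is_grading H A A_ &
      (forall g h, H g -> H h ->
         forall z, prodset (A_ g) (A_ h) z <-> A_ (g * h)%g z)].

Definition eps_strongly_graded (S_ : G -> S -> Prop) (eps : G -> S) : Prop :=
  forall g,
    [/\ prodset (S_ g) (S_ (g^-1)%g) (eps g),
        (forall x, prodset (S_ g) (S_ (g^-1)%g) x -> eps g * x = x /\ x * eps g = x) &
        (forall x, S_ g x -> eps g * x = x /\ x * eps (g^-1)%g = x)].

(* B(E_G): multiplicative semigroup generated by the eps g *)
Definition inB (eps : G -> S) (x : S) : Prop :=
  exists gs : seq G, (0 < size gs)%N /\ x = \prod_(g <- gs) eps g.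

Definition inBstar (eps : G -> S) (x : S) : Prop := inB eps x /\ x <> 0.

Definition leB (a b : S) : Prop := a = a * b.

Definition minimalB (eps : G -> S) (r : S) : Prop :=
  inBstar eps r /\ (forall a, inBstar eps a -> leB a r -> a = r).

Definition Nset (eps : G -> S) (r : S) : G -> Prop := fun g => r * eps g = r.

Definition is_subgroup (H : G -> Prop) : Prop :=
  [/\ H 1%g, (forall g h, H g -> H h -> H (g * h)%g) & (forall g, H g -> H (g^-1)%g)].

Definition eps_central (eps : G -> S) (r : S) : Prop :=
  minimalB eps r /\ is_subgroup (Nset eps r).

(* (rS)_N = \bigoplus_{g in N} r S_g, as the set of finite sums *)
Definition restr_part (S_ : G -> S -> Prop) (r : S) (N : G -> Prop) : S -> Prop :=
  fun z => exists n (gs : 'I_n -> G) (xs : 'I_n -> S),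
    (forall i, N (gs i) /\ S_ (gs i) (xs i)) /\ z = \sum_(i < n) r * xs i.

End Defs.

From HB Require Import structures.
From mathcomp Require Import all_boot all_algebra.
From Stdlib Require Import FunctionalExtensionality PropExtensionality.
Import GRing.Theory.
Set Implicit Arguments.
Unset Strict Implicit.
Unset Printing Implicit Defensive.
Local Open Scope ring_scope.

(* The proof rests on one general construction (Section Corner): if e is a
   central idempotent of degree 1 with e = e eps_g for every g in a submonoid
   H of G, then the restricted corner (eS)_H = sum_{g in H} e S_g is a ring
   with identity e, strongly H-graded by the components e S_g; strongness
   comes from e x = e eps_g x and eps_g in S_g S_{g^-1}.

   From these, an epsilon-central r is a
   central idempotent of degree 1 killing S_g for g outside N(r), so part (i)
   is the corner construction for e = r, H = N(r).  Two distinct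
   epsilon-central r, s are orthogonal, hence part (ii) is the corner
   construction for e = r + s, H = N(r) /\ N(s). *)

Definition catf (T : Type) n m (F : 'I_n -> T) (F' : 'I_m -> T) : 'I_(n + m) -> T :=
  fun i => match split i with inl j => F j | inr k => F' k end.

Lemma catf_lshift T n m (F : 'I_n -> T) (F' : 'I_m -> T) j :
  catf F F' (lshift m j) = F j.
Proof. by rewrite /catf -[lshift m j]/(unsplit (inl j)) unsplitK. Qed.

Lemma catf_rshift T n m (F : 'I_n -> T) (F' : 'I_m -> T) j :
  catf F F' (rshift n j) = F' j.
Proof. by rewrite /catf -[rshift n j]/(unsplit (inr j)) unsplitK. Qed.

Lemma catf_rel T U (R : T -> U -> Prop) n m (F : 'I_n -> T) (F' : 'I_m -> T)
    (H : 'I_n -> U) (H' : 'I_m -> U) :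
  (forall i, R (F i) (H i)) -> (forall i, R (F' i) (H' i)) ->
  forall i, R (catf F F' i) (catf H H' i).
Proof. by move=> RF RF' i; rewrite /catf; case: (split i). Qed.

Lemma sum_catf (T : Type) (V : nmodType) (f : T -> V) n m (F : 'I_n -> T) (F' : 'I_m -> T) :
  \sum_(i < n + m) f (catf F F' i) = \sum_(i < n) f (F i) + \sum_(i < m) f (F' i).
Proof.
by rewrite big_split_ord; congr (_ + _); apply: eq_bigr => i _;
  rewrite ?catf_lshift ?catf_rshift.
Qed.

Lemma pred_ext (T : Type) (A B : T -> Prop) : (forall z, A z <-> B z) -> A = B.
Proof.
by move=> AB; apply: functional_extensionality => z;
  apply: propositional_extensionality.
Qed.

Section AdditiveSubgroup.
Variables (S : pzRingType) (A : S -> Prop).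
Hypothesis addA : additive_subgroup A.

Lemma addsub0 : A 0. Proof. by case: addA. Qed.

Lemma addsubB x y : A x -> A y -> A (x - y).
Proof. by case: addA => _; apply. Qed.

Lemma addsubN x : A x -> A (- x).
Proof. by move=> Ax; rewrite -sub0r; apply: addsubB => //; apply: addsub0. Qed.

Lemma addsubD x y : A x -> A y -> A (x + y).
Proof. by move=> Ax Ay; rewrite -[y]opprK; apply: addsubB => //; apply: addsubN. Qed.

Lemma addsub_sum n (F : 'I_n -> S) : (forall i, A (F i)) -> A (\sum_(i < n) F i).
Proof. by move=> AF; apply: (big_ind A) => //; [apply: addsub0 | apply: addsubD]. Qed.

End AdditiveSubgroup.

Section GradedRing.
Variables (G : groupType) (S : pzRingType) (S_ : G -> S -> Prop).
Hypothesis gradedS : graded S_.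

Lemma comp_addsub g : additive_subgroup (S_ g).
Proof. by case: gradedS => comp _ _ _; case: (comp g I). Qed.

Lemma comp_mul g h x y : S_ g x -> S_ h y -> S_ (g * h)%g (x * y).
Proof. by case: gradedS => _ _ _; apply. Qed.

Lemma comp_decomp x : exists n (gs : 'I_n -> G) (xs : 'I_n -> S),
  (forall i, S_ (gs i) (xs i)) /\ x = \sum_(i < n) xs i.
Proof.
case: gradedS => _ decomp _ _; have [n [gs [xs [Hxs ->]]]] := decomp x I.
by exists n, gs, xs; split => // i; case: (Hxs i).
Qed.

Lemma comp_indep n (gs : 'I_n -> G) (xs : 'I_n -> S) : injective gs ->
  (forall i, S_ (gs i) (xs i)) -> \sum_(i < n) xs i = 0 -> forall i, xs i = 0.
Proof.
move=> gs_inj Hxs; case: gradedS => _ _ indep _.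
by apply: (indep n gs xs gs_inj) => i; split.
Qed.

Lemma comp_eq g h x : g = h -> S_ g x -> S_ h x.
Proof. by move->. Qed.

Lemma comp_mul1l e g x : S_ 1%g e -> S_ g x -> S_ g (e * x).
Proof. by move=> He Hx; apply: comp_eq (comp_mul He Hx); rewrite mul1g. Qed.

Lemma prodset_comp g h z : prodset (S_ g) (S_ h) z -> S_ (g * h)%g z.
Proof.
move=> [n [a [b [Hab ->]]]]; apply: (addsub_sum (comp_addsub (g * h)%g)) => i.
by case: (Hab i); apply: comp_mul.
Qed.

Lemma prodset_mulr g h z y :
  prodset (S_ g) (S_ h) z -> S_ 1%g y -> prodset (S_ g) (S_ h) (z * y).
Proof.
move=> [n [a [b [Hab ->]]]] Hy; exists n, a, (fun i => b i * y); split.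
  by move=> i; case: (Hab i) => Ha Hb; split => //; rewrite -[h]mulg1; apply: comp_mul.
by rewrite mulr_suml; apply: eq_bigr => i _; rewrite mulrA.
Qed.

Lemma prodset_mull g h z y :
  prodset (S_ g) (S_ h) z -> S_ 1%g y -> prodset (S_ g) (S_ h) (y * z).
Proof.
move=> [n [a [b [Hab ->]]]] Hy; exists n, (fun i => y * a i), b; split.
  by move=> i; case: (Hab i) => Ha Hb; split => //; rewrite -[g]mul1g; apply: comp_mul.
by rewrite mulr_sumr; apply: eq_bigr => i _; rewrite mulrA.
Qed.

End GradedRing.

Section EpsilonStrong.
Variables (G : groupType) (S : pzRingType) (S_ : G -> S -> Prop) (eps : G -> S).
Hypothesis gradedS : graded S_.
Hypothesis epsS : eps_strongly_graded S_ eps.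

Lemma eps_S1 g : S_ 1%g (eps g).
Proof.
case: (epsS g) => ideal_eps _ _.
by apply: comp_eq (prodset_comp gradedS ideal_eps); rewrite mulgV.
Qed.

Lemma eps_idem g : eps g * eps g = eps g.
Proof. by case: (epsS g) => ideal_eps unit_eps _; case: (unit_eps _ ideal_eps). Qed.

(* eps g is the identity of the ideal S_g S_{g^-1} of S_1, hence central in S_1:
   both eps g * y and y * eps g lie in that ideal. *)
Lemma eps_commute g y : S_ 1%g y -> eps g * y = y * eps g.
Proof.
move=> Hy; case: (epsS g) => ideal_eps unit_eps _.
have [_ <-] := unit_eps _ (prodset_mulr gradedS ideal_eps Hy).
have [<- _] := unit_eps _ (prodset_mull gradedS ideal_eps Hy).
by rewrite mulrA.
Qed.

Lemma eps_shift g h x : S_ g x -> x * eps h = eps (g * h)%g * x.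
Proof.
move=> Hx.
have left_id : eps (g * h)%g * (x * eps h) = x * eps h.
  case: (epsS h) => [[n [a [b [Hab ->]]]] _ _].
  rewrite !mulr_sumr; apply: eq_bigr => i _; case: (Hab i) => Ha _.
  case: (epsS (g * h)%g) => _ _ unit_gh.
  by have [Exa _] := unit_gh _ (comp_mul gradedS Hx Ha); rewrite !mulrA -(mulrA _ x) Exa.
have right_id : eps (g * h)%g * x * eps h = eps (g * h)%g * x.
  case: (epsS (g * h)%g) => [[n [a [b [Hab ->]]]] _ _].
  rewrite !mulr_suml; apply: eq_bigr => i _; case: (Hab i) => _ Hb.
  have Hbx : S_ (h^-1)%g (b i * x).
    by apply: comp_eq (comp_mul gradedS Hb Hx); rewrite invgM -mulgA mulVg mulg1.
  case: (epsS (h^-1)%g) => _ _ unit_hinv; have [_] := unit_hinv _ Hbx.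
  by rewrite invgK -!mulrA (mulrA (b i)) => ->.
by rewrite -left_id mulrA right_id.
Qed.

Definition eps_prod (l : seq G) : S := \prod_(h <- l) eps h.

Lemma eps_prod_cons g l : eps_prod (g :: l) = eps g * eps_prod l.
Proof. by rewrite /eps_prod big_cons. Qed.

Lemma eps_prod_cat l l' : eps_prod (l ++ l') = eps_prod l * eps_prod l'.
Proof. by rewrite /eps_prod big_cat. Qed.

Lemma eps_prod_commute y l : S_ 1%g y -> y * eps_prod l = eps_prod l * y.
Proof.
move=> Hy; elim: l => [|g l IH]; first by rewrite /eps_prod big_nil mulr1 mul1r.
by rewrite eps_prod_cons mulrA -eps_commute // -mulrA IH mulrA.
Qed.

Lemma comp_mul_eps_prod g y l : S_ g y -> S_ g (y * eps_prod l).
Proof.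
elim: l y => [|h l IH] y Hy; first by rewrite /eps_prod big_nil mulr1.
rewrite eps_prod_cons mulrA; apply: IH.
by apply: comp_eq (comp_mul gradedS Hy (eps_S1 h)); rewrite mulg1.
Qed.

Lemma eps_prod_S1 l : (0 < size l)%N -> S_ 1%g (eps_prod l).
Proof. by case: l => // g l _; rewrite eps_prod_cons; apply/comp_mul_eps_prod/eps_S1. Qed.

Lemma eps_prod_fix z l : (forall h, h \in l -> z * eps h = z) -> z * eps_prod l = z.
Proof.
elim: l => [|g l IH] fix_l; first by rewrite /eps_prod big_nil mulr1.
rewrite eps_prod_cons mulrA fix_l ?mem_head // IH // => h hl.
by apply: fix_l; rewrite in_cons hl orbT.
Qed.

Lemma eps_prod_absorb l h : h \in l -> eps_prod l * eps h = eps_prod l.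
Proof.
elim: l => [|g l IH] //; rewrite in_cons eps_prod_cons => /orP [/eqP <-|hl].
  by rewrite -mulrA -(eps_prod_commute _ (eps_S1 h)) mulrA eps_idem.
by rewrite -mulrA IH.
Qed.

Lemma eps_prod_idem l : eps_prod l * eps_prod l = eps_prod l.
Proof. by apply: eps_prod_fix => h; apply: eps_prod_absorb. Qed.

Lemma eps_prod_shift g x l : S_ g x -> x * eps_prod l = eps_prod (map (fun h => g * h)%g l) * x.
Proof.
move=> Hx; elim: l => [|h l IH]; first by rewrite /eps_prod big_nil mulr1 mul1r.
by rewrite /= !eps_prod_cons mulrA (eps_shift _ Hx) -mulrA IH mulrA.
Qed.

Lemma inB_eps g : inB eps (eps g).
Proof. by exists [:: g]; rewrite big_seq1. Qed.

Lemma inB_mul a b : inB eps a -> inB eps b -> inB eps (a * b).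
Proof.
move=> [l [l_gt0 ->]] [l' [_ ->]]; exists (l ++ l').
by rewrite size_cat addn_gt0 l_gt0 -eps_prod_cat.
Qed.

Lemma inB_S1 a : inB eps a -> S_ 1%g a.
Proof. by move=> [l [l_gt0 ->]]; apply: eps_prod_S1. Qed.

Lemma inB_commute a y : inB eps a -> S_ 1%g y -> y * a = a * y.
Proof. by move=> [l [_ ->]]; apply: eps_prod_commute. Qed.

Lemma inB_idem a : inB eps a -> a * a = a.
Proof. by move=> [l [_ ->]]; apply: eps_prod_idem. Qed.

(* A minimal element r of B(E_G)^* is "atomic": for every b in B(E_G), the
   element r b of B(E_G) lies below r, so it is either r or 0. *)
Lemma minimal_dichotomy r b : minimalB eps r -> inB eps b -> r * b = r \/ r * b = 0.
Proof.
move=> [[Br _] min_r] Bb; have [rb0|rb_neq0] := eqVneq (r * b) 0; first by right.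
left; apply: min_r; first by split; [apply: inB_mul | apply/eqP].
by rewrite /leB -mulrA -(inB_commute Bb (inB_S1 Br)) mulrA inB_idem.
Qed.

End EpsilonStrong.

Section RestrictedCorner.
Variables (G : groupType) (S : pzRingType) (S_ : G -> S -> Prop).
Hypothesis gradedS : graded S_.
Variables (e : S) (H : G -> Prop).

Local Notation eS_H := (restr_part S_ e H).

Lemma restr0 : eS_H 0.
Proof. by exists 0%N, (fun _ => 1%g), (fun _ => 0); split => [[]|]; rewrite ?big_ord0. Qed.

Lemma restr_comp g x : H g -> S_ g x -> eS_H (e * x).
Proof. by move=> Hg Hx; exists 1%N, (fun _ => g), (fun _ => x); rewrite big_ord1. Qed.

Lemma restrD a b : eS_H a -> eS_H b -> eS_H (a + b).
Proof.
move=> [n [gs [xs [Hxs ->]]]] [m [hs [ys [Hys ->]]]].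
exists (n + m)%N, (catf gs hs), (catf xs ys); split.
  exact: (@catf_rel _ _ (fun g x => H g /\ S_ g x)).
by rewrite (sum_catf (fun x => e * x)).
Qed.

Lemma restrN a : eS_H a -> eS_H (- a).
Proof.
move=> [n [gs [xs [Hxs ->]]]]; exists n, gs, (fun i => - xs i); split.
  by move=> i; case: (Hxs i) => Hg Hx; split => //; apply: addsubN (comp_addsub gradedS _) _ _.
by rewrite -sumrN; apply: eq_bigr => i _; rewrite mulrN.
Qed.

Lemma restr_sum n (F : 'I_n -> S) : (forall i, eS_H (F i)) -> eS_H (\sum_(i < n) F i).
Proof. by move=> HF; apply: (big_ind eS_H) => //; [apply: restr0 | apply: restrD]. Qed.

Lemma restr_absorb z : e * e = e -> eS_H z -> e * z = z.
Proof.
move=> e_idem [n [gs [xs [_ ->]]]]; rewrite mulr_sumr.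
by apply: eq_bigr => i _; rewrite mulrA e_idem.
Qed.

Lemma restr_sub f z : S_ 1%g e -> f * e = e -> eS_H z -> restr_part S_ f H z.
Proof.
move=> e_S1 fe [n [gs [xs [Hxs ->]]]]; exists n, gs, (fun i => e * xs i); split.
  move=> i; case: (Hxs i) => Hg Hx; split => //.
  exact: (comp_mul1l gradedS e_S1 Hx).
by apply: eq_bigr => i _; rewrite mulrA fe.
Qed.

End RestrictedCorner.

Section Corner.
Variables (G : groupType) (S : pzRingType) (S_ : G -> S -> Prop) (eps : G -> S).
Hypothesis gradedS : graded S_.
Hypothesis epsS : eps_strongly_graded S_ eps.
Variables (e : S) (H : G -> Prop).
Hypothesis e_S1 : S_ 1%g e.
Hypothesis e_idem : e * e = e.
Hypothesis e_central : forall z, e * z = z * e.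
Hypothesis H1 : H 1%g.
Hypothesis HM : forall g h, H g -> H h -> H (g * h)%g.
Hypothesis e_below : forall g, H g -> e * eps g = e.

Local Notation eS g := (lmulset e (S_ g)).
Local Notation eS_H := (restr_part S_ e H).

Lemma lmul_comp g z : eS g z -> S_ g z.
Proof. by move=> [x [Hx ->]]; apply: (comp_mul1l gradedS e_S1 Hx). Qed.

Lemma lmulM x y : e * x * (e * y) = e * (x * y).
Proof. by rewrite -mulrA (mulrA x) -e_central !mulrA e_idem. Qed.

Lemma lmul_addsub g : additive_subgroup (eS g).
Proof.
have Sg := comp_addsub gradedS g.
split; first by exists 0; split; [apply: addsub0 Sg | rewrite mulr0].
move=> _ _ [x [Hx ->]] [y [Hy ->]]; exists (x - y); split; last by rewrite mulrBr.
exact: addsubB Sg _ _ Hx Hy.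
Qed.

Lemma restrM a b : eS_H a -> eS_H b -> eS_H (a * b).
Proof.
move=> [n [gs [xs [Hxs ->]]]] [m [hs [ys [Hys ->]]]].
rewrite mulr_suml; apply: restr_sum => i; rewrite mulr_sumr; apply: restr_sum => j.
case: (Hxs i) (Hys j) => [Hg Hx] [Hh Hy]; rewrite lmulM.
exact: (restr_comp e (HM Hg Hh) (comp_mul gradedS Hx Hy)).
Qed.

(* Strong grading: e S_{gh} = (e S_g)(e S_h) for g in H, because
   e x = e eps_g x and eps_g is a sum of products of S_g by S_{g^-1}. *)
Lemma corner_strong g h z : H g -> prodset (eS g) (eS h) z <-> eS (g * h)%g z.
Proof.
move=> Hg; split.
  move=> [n [a [b [Hab ->]]]]; exists (\sum_(i < n) a i * b i); split.
    apply: (prodset_comp gradedS); exists n, a, b; split => // i.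
    by case: (Hab i) => Ha Hb; split; apply: lmul_comp.
  rewrite mulr_sumr; apply: eq_bigr => i _.
  by case: (Hab i) => [[x [_ ->]] _]; rewrite !mulrA e_idem.
move=> [x [Hx ->]]; case: (epsS g) => [[n [a [b [Hab Eeps]]]] _ _].
exists n, (fun i => e * a i), (fun i => e * (b i * x)); split.
  move=> i; case: (Hab i) => Ha Hb; split; [exists (a i) | exists (b i * x)]; split => //.
  by apply: comp_eq (comp_mul gradedS Hb Hx); rewrite mulKg.
rewrite (eq_bigr (fun i => e * (a i * b i) * x)); last by move=> i _; rewrite lmulM !mulrA.
by rewrite -mulr_suml -mulr_sumr -Eeps e_below.
Qed.

(* Stated for arbitrary predicates A, A_ with the extensions of (eS)_H and of
   the e S_g, so that it applies to the presentations of parts (i) and (ii). *)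
Theorem corner_strongly_graded (A : S -> Prop) (A_ : G -> S -> Prop) :
  (forall z, A z <-> eS_H z) -> (forall g z, A_ g z <-> eS g z) ->
  strongly_graded_ring_with_id H A A_ e.
Proof.
move=> /pred_ext -> A_E.
have -> : A_ = fun g => eS g by apply: functional_extensionality => g; apply: pred_ext.
split.
- split; last exact: restrM.
  split; first exact: restr0.
  by move=> a b Ha Hb; apply: restrD Ha (restrN gradedS Hb).
- split; first by have := restr_comp e H1 e_S1; rewrite e_idem.
  move=> z Hz; have ez := restr_absorb e_idem Hz.
  by split; rewrite // -e_central.
- split.
  + by move=> g Hg; split; [apply: lmul_addsub | move=> _ [x [Hx ->]]; exact: (restr_comp e Hg Hx)].
  + move=> _ [n [gs [xs [Hxs ->]]]]; exists n, gs, (fun i => e * xs i); split => // i.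
    by case: (Hxs i) => Hg Hx; split => //; exists (xs i).
  + move=> n gs xs gs_inj Hxs; apply: (comp_indep gradedS gs_inj) => i.
    by case: (Hxs i) => _; apply: lmul_comp.
  + move=> g h x y _ _ [x' [Hx' ->]] [y' [Hy' ->]]; exists (x' * y'); split.
      exact: (comp_mul gradedS Hx' Hy').
    exact: lmulM.
- by move=> g h Hg _ z; apply: corner_strong.
Qed.

End Corner.

Section EpsilonCentral.
Variables (G : groupType) (S : pzRingType) (S_ : G -> S -> Prop) (eps : G -> S).
Hypothesis gradedS : graded S_.
Hypothesis epsS : eps_strongly_graded S_ eps.
Variable r : S.
Hypothesis r_eps_central : eps_central eps r.

Local Notation N := (Nset eps r).

Lemma r_inB : inB eps r.
Proof. by case: r_eps_central => [[[Br _] _] _]. Qed.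

Lemma r_minimal : minimalB eps r.
Proof. by case: r_eps_central. Qed.

Lemma N_subgroup : is_subgroup N.
Proof. by case: r_eps_central. Qed.

Lemma r_S1 : S_ 1%g r.
Proof. exact: (inB_S1 gradedS epsS r_inB). Qed.

Lemma r_idem : r * r = r.
Proof. exact: (inB_idem gradedS epsS r_inB). Qed.

(* By minimality r eps_g is r or 0; outside N(r) it is 0, and so is r S_g
   since x = eps_g x for x in S_g. *)
Lemma r_eps_out g : ~ N g -> r * eps g = 0.
Proof. by move=> Ng; case: (minimal_dichotomy gradedS epsS r_minimal (inB_eps eps g)). Qed.

Lemma r_kill g x : ~ N g -> S_ g x -> r * x = 0.
Proof.
move=> Ng Hx; case: (epsS g) => _ _ /(_ x Hx) [<- _].
by rewrite mulrA r_eps_out // mul0r.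
Qed.

(* Writing r = eps_{h_1} ... eps_{h_k}
   (all h_j in N(r)), moving x in S_g across r translates the h_j by g or g^-1,
   and such translates stay in the subgroup N(r), so r absorbs them:
   r x r = r x and r x r = x r. *)
Lemma r_commute_in g x : N g -> S_ g x -> r * x = x * r.
Proof.
move=> Ng Hx; have [l [_ Er]] := r_inB; have [_ NM NV] := N_subgroup.
have N_l h : h \in l -> N h by move=> hl; rewrite /Nset Er (eps_prod_absorb gradedS epsS).
have r_fix k : N k -> r * eps_prod eps (map (fun h => k * h)%g l) = r.
  move=> Nk; apply: eps_prod_fix => _ /mapP [h hl ->].
  by apply: NM => //; apply: N_l.
have shift_right : x * r = eps_prod eps (map (fun h => g * h)%g l) * x.
  by rewrite Er (eps_prod_shift gradedS epsS _ Hx).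
have shift_left : r * x = x * eps_prod eps (map (fun h => g^-1 * h)%g l).
  rewrite (eps_prod_shift gradedS epsS _ Hx) -map_comp Er.
  by rewrite (@eq_map _ _ _ id) ?map_id // => h /=; rewrite mulVKg.
have rxr_left : r * x * r = r * x by rewrite -mulrA shift_right mulrA r_fix.
have rxr_right : r * x * r = x * r.
  by rewrite shift_left -mulrA -(eps_prod_commute gradedS epsS _ r_S1) (r_fix _ (NV _ Ng)).
by rewrite -rxr_left rxr_right.
Qed.

(* Outside N(r) both r x and x r vanish (x = x eps_{g^-1}, and g^-1 is also
   outside N(r)); hence r commutes with every homogeneous element. *)
Lemma r_commute_comp g x : S_ g x -> r * x = x * r.
Proof.
move=> Hx; have [Ng|Ng] := eqVneq (r * eps g) r; first exact: r_commute_in Ng Hx.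
have [_ _ NV] := N_subgroup.
have Ng' : ~ N g by move=> /eqP; apply/negP.
have Nginv : ~ N (g^-1)%g by move=> /NV; rewrite invgK.
have xr0 : x * r = 0.
  case: (epsS g) => _ _ /(_ x Hx) [_ <-].
  by rewrite -mulrA (inB_commute gradedS epsS r_inB (eps_S1 gradedS epsS _)) r_eps_out ?mulr0.
by rewrite xr0 (r_kill Ng' Hx).
Qed.

Lemma r_central z : r * z = z * r.
Proof.
have [n [gs [xs [Hxs ->]]]] := comp_decomp gradedS z.
by rewrite mulr_sumr mulr_suml; apply: eq_bigr => i _; apply: r_commute_comp (Hxs i).
Qed.

(* rS is spanned by the r S_g with g in N(r): the other components are killed. *)
Lemma lmul_all_restr z : lmulset r (fun _ => True) z <-> restr_part S_ r N z.
Proof.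
split; last first.
  by move=> [n [gs [xs [_ ->]]]]; exists (\sum_(i < n) xs i); rewrite mulr_sumr.
move=> [x [_ ->]]; have [n [gs [xs [Hxs ->]]]] := comp_decomp gradedS x.
have [N1 _ _] := N_subgroup.
pose inN i := r * eps (gs i) == r.
exists n, (fun i => if inN i then gs i else 1%g), (fun i => if inN i then xs i else 0).
split.
  move=> i; rewrite /inN; case: eqP => // _; split => //.
  exact: addsub0 (comp_addsub gradedS _).
rewrite mulr_sumr; apply: eq_bigr => i _; rewrite /inN; case: eqP => // Ng.
by rewrite mulr0 (r_kill Ng (Hxs i)).
Qed.

Lemma r_corner_strong g h : N g ->
  forall z, prodset (lmulset r (S_ g)) (lmulset r (S_ h)) z <-> lmulset r (S_ (g * h)%g) z.
Proof.
move=> Ng z.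
exact: (corner_strong gradedS epsS r_S1 r_idem r_central (fun k (Nk : N k) => Nk) h z Ng).
Qed.

Lemma r_corner :
  strongly_graded_ring_with_id N (lmulset r (fun _ => True)) (fun g => lmulset r (S_ g)) r.
Proof.
have [N1 NM _] := N_subgroup.
exact: (corner_strongly_graded gradedS epsS r_S1 r_idem r_central N1 NM (fun k (Nk : N k) => Nk)
          lmul_all_restr (fun g z => iff_refl _)).
Qed.

End EpsilonCentral.

Section TwoCentral.
Variables (G : groupType) (S : pzRingType) (S_ : G -> S -> Prop) (eps : G -> S).
Hypothesis gradedS : graded S_.
Hypothesis epsS : eps_strongly_graded S_ eps.
Variables r s : S.
Hypothesis r_eps_central : eps_central eps r.
Hypothesis s_eps_central : eps_central eps s.
Hypothesis r_neq_s : r <> s.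

Local Notation N := (fun g => Nset eps r g /\ Nset eps s g).

Let idem_r := r_idem gradedS epsS r_eps_central.
Let idem_s := r_idem gradedS epsS s_eps_central.
Let central_r := r_central gradedS epsS r_eps_central.
Let central_s := r_central gradedS epsS s_eps_central.

(* By minimality, r s is r or 0 and s r is s or 0; as r s = s r and r <> s,
   both products vanish. *)
Lemma central_orth : r * s = 0.
Proof.
have [rs_r|//] := minimal_dichotomy gradedS epsS (r_minimal r_eps_central) (r_inB s_eps_central).
have [sr_s|sr0] := minimal_dichotomy gradedS epsS (r_minimal s_eps_central) (r_inB r_eps_central).
  by case: r_neq_s; rewrite -rs_r central_r sr_s.
by rewrite central_r sr0.
Qed.

Lemma central_orth' : s * r = 0.
Proof. by rewrite -central_r central_orth. Qed.

Lemma sum_S1 : S_ 1%g (r + s).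
Proof.
exact: (addsubD (comp_addsub gradedS 1%g) (r_S1 gradedS epsS r_eps_central)
          (r_S1 gradedS epsS s_eps_central)).
Qed.

Lemma sum_absorb_r : (r + s) * r = r.
Proof. by rewrite mulrDl idem_r central_orth' addr0. Qed.

Lemma sum_absorb_s : (r + s) * s = s.
Proof. by rewrite mulrDl idem_s central_orth add0r. Qed.

Lemma sum_idem : (r + s) * (r + s) = r + s.
Proof. by rewrite mulrDr sum_absorb_r sum_absorb_s. Qed.

Lemma sum_central z : (r + s) * z = z * (r + s).
Proof. by rewrite mulrDl mulrDr central_r central_s. Qed.

Lemma N1 : N 1%g.
Proof. by have [? _ _] := N_subgroup r_eps_central; have [? _ _] := N_subgroup s_eps_central. Qed.

Lemma NM g h : N g -> N h -> N (g * h)%g.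
Proof.
have [_ NMr _] := N_subgroup r_eps_central; have [_ NMs _] := N_subgroup s_eps_central.
by move=> [Nrg Nsg] [Nrh Nsh]; split; [apply: NMr | apply: NMs].
Qed.

Lemma sum_below g : N g -> (r + s) * eps g = r + s.
Proof. by move=> [Nrg Nsg]; rewrite mulrDl Nrg Nsg. Qed.

Lemma restr_sum_rs z :
  (exists a b, [/\ restr_part S_ r N a, restr_part S_ s N b & z = a + b]) <->
  restr_part S_ (r + s) N z.
Proof.
split.
  move=> [a [b [Ha Hb ->]]]; apply: restrD.
    exact: (restr_sub gradedS (r_S1 gradedS epsS r_eps_central) sum_absorb_r Ha).
  exact: (restr_sub gradedS (r_S1 gradedS epsS s_eps_central) sum_absorb_s Hb).
move=> [n [gs [xs [Hxs ->]]]].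
exists (\sum_(i < n) r * xs i), (\sum_(i < n) s * xs i); split.
- by exists n, gs, xs.
- by exists n, gs, xs.
- by rewrite -big_split; apply: eq_bigr => i _; rewrite mulrDl.
Qed.

Lemma comp_rs g z :
  (exists x y, [/\ S_ g x, S_ g y & z = r * x + s * y]) <-> lmulset (r + s) (S_ g) z.
Proof.
split; last by move=> [x [Hx ->]]; exists x, x; rewrite mulrDl.
move=> [x [y [Hx Hy ->]]]; exists (r * x + s * y); split.
  apply: (addsubD (comp_addsub gradedS g)).
    exact: (comp_mul1l gradedS (r_S1 gradedS epsS r_eps_central) Hx).
  exact: (comp_mul1l gradedS (r_S1 gradedS epsS s_eps_central) Hy).
by rewrite mulrDr !mulrA sum_absorb_r sum_absorb_s.
Qed.

(* Part (ii), directness: (rS)_N and (sS)_N are separated by r and s. *)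
Lemma restr_orth a b : restr_part S_ r N a -> restr_part S_ s N b -> a + b = 0 ->
  a = 0 /\ b = 0.
Proof.
move=> Ha Hb ab0.
have ra := restr_absorb idem_r Ha; have sb := restr_absorb idem_s Hb.
have rb : r * b = 0 by rewrite -sb mulrA central_orth mul0r.
have sa : s * a = 0 by rewrite -ra mulrA central_orth' mul0r.
split.
  by move: (congr1 (fun t => r * t) ab0); rewrite /= mulrDr ra rb addr0 mulr0.
by move: (congr1 (fun t => s * t) ab0); rewrite /= mulrDr sa sb add0r mulr0.
Qed.

Lemma sum_corner :
  strongly_graded_ring_with_id N
    (fun z => exists a b, [/\ restr_part S_ r N a, restr_part S_ s N b & z = a + b])
    (fun g z => exists x y, [/\ S_ g x, S_ g y & z = r * x + s * y])
    (r + s).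
Proof.
exact: (corner_strongly_graded gradedS epsS sum_S1 sum_idem sum_central N1 NM sum_below
          restr_sum_rs comp_rs).
Qed.

End TwoCentral.

Theorem mainTheorem9 (G : groupType) (S : pzRingType)
  (S_ : G -> S -> Prop) (eps : G -> S) (r s : S) :
  graded S_ -> eps_strongly_graded S_ eps ->
  eps_central eps r -> eps_central eps s -> r <> s ->
  (* (i) *)
  ((forall g h, Nset eps r g -> Nset eps r h ->
      forall z, prodset (lmulset r (S_ g)) (lmulset r (S_ h)) z <->
                lmulset r (S_ (g * h)%g) z)
   /\ (forall g, ~ Nset eps r g -> forall x, S_ g x -> r * x = 0)
   /\ strongly_graded_ring_with_id (Nset eps r) (lmulset r (fun _ => True))
        (fun g => lmulset r (S_ g)) r)
  /\
  (* (ii) *)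
  (let N := fun g => Nset eps r g /\ Nset eps s g in
   (forall a b, restr_part S_ r N a -> restr_part S_ s N b -> a + b = 0 ->
      a = 0 /\ b = 0)
   /\ strongly_graded_ring_with_id N
        (fun z => exists a b, [/\ restr_part S_ r N a, restr_part S_ s N b & z = a + b])
        (fun g z => exists x y, [/\ S_ g x, S_ g y & z = r * x + s * y])
        (r + s)).
Proof.
move=> gradedS epsS r_ec s_ec r_neq_s; split.
  split; first by move=> g h Ng _; apply: (r_corner_strong gradedS epsS r_ec).
  split; first by move=> g Ng x; apply: (r_kill gradedS epsS r_ec).
  exact: (r_corner gradedS epsS r_ec).
split; first exact: (restr_orth gradedS epsS r_ec s_ec r_neq_s).
exact: (sum_corner gradedS epsS r_ec s_ec r_neq_s).
Qed.
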